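(* Let $X_1,\dots,X_n$ be (possibly dependent) component lifetimes identically distributed as $X$, let $\tau(\mathbf X)$ be the lifetime of a coherent system with these components and domination function $h$, i.e. $\bar F_{\tau(\mathbf X)}(x)=h(\bar F_X(x))$, and let $H(p)=ph'(p)/h(p)$, $p\in(0,1)$. For $t\ge0$, let $(\tau(\mathbf X))_t=(\tau(\mathbf X)-t\mid\tau(\mathbf X)>t)$, and let $\tau(\mathbf X_t)$ be the lifetime of the coherent system with the same structure built from the used components $(X_i)_t=(X_i-t\mid X_i>t)$, with reliability $\bar F_{\tau(\mathbf X_t)}(x)=h\big(\bar F_X(t+x)/\bar F_X(t)\big)$. If $(1-p)H'(p)/H(p)$ is decreasing and non-positive in $p\in(0,1)$, then for any fixed $t\ge0$, $\tau(\mathbf X_t)\underset{c}{\prec}(\tau(\mathbf X))_t$.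
   Context: All random variables are non-negative and absolutely continuous with support $[0,\infty)$. For a random variable $W$: density $f_W$, survival $\bar F_W$, hazard rate $r_W=f_W/\bar F_W$. $U\underset{c}{\prec}V$ means $r_U(x)/r_V(x)$ is increasing (non-decreasing) in $x\ge0$. The domination function $h:[0,1]\to[0,1]$ is increasing, continuous, $h(0)=0$, $h(1)=1$, assumed differentiable as needed. ''Decreasing'' means non-increasing; ''negative'' in the paper means non-positive. *)

From Stdlib Require Import Reals.
From Coquelicot Require Import Coquelicot.
Open Scope R_scope.

Definition hazard (S : R -> R) (x : R) : R := - Derive S x / S x.

Definition c_order (SU SV : R -> R) : Prop :=
  forall x y, 0 < x -> x <= y ->
    hazard SU x / hazard SV x <= hazard SU y / hazard SV y.

Definition residual (S : R -> R) (t : R) : R -> R :=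
  fun x => S (t + x) / S t.

Definition system (h : R -> R) (S : R -> R) : R -> R :=
  fun x => h (S x).

Definition Hfun (h : R -> R) (p : R) : R := p * Derive h p / h p.

From Stdlib Require Import Reals Lra.
From Coquelicot Require Import Coquelicot.
Open Scope R_scope.

(* Write p = Fbar (t + x) and c = Fbar t.  By the chain rule the hazard of a
   system with domination function h is H(S) times the hazard of S, and the
   hazard of a residual lifetime is a shifted hazard; hence the ratio of the
   two hazard rates at x is H(p / c) / H(p).  As x grows p decreases, so it
   suffices that p |-> H(p / c) / H(p) is non-increasing on (0, c), and the
   sign of its derivative is controlled by the two hypotheses on
   K(p) = (1 - p) H'(p) / H(p). *)

Lemma nonincreasing_of_derive_nonpos (f df : R -> R) (a b : R) :
  (forall x, a < x < b -> is_derive f x (df x)) ->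
  (forall x, a < x < b -> df x <= 0) ->
  forall x y, a < x -> x <= y -> y < b -> f y <= f x.
Proof.
  intros f_df df_nonpos x y ax xy yb.
  destruct (Req_dec x y) as [<- | x_neq_y]; [lra |].
  destruct (MVT_gen f x y df) as [z [z_in f_incr]];
    rewrite Rmin_left, Rmax_right in * by lra.
  - intros z z_in. apply f_df. lra.
  - intros z z_in. apply derivable_continuous_pt. exists (df z).
    apply is_derive_Reals, f_df. lra.
  - assert (df z * (y - x) <= 0) by (apply Rmult_le_0_r; [apply df_nonpos |]; lra).
    lra.
Qed.

Lemma derive_nonneg_of_nondecreasing (f : R -> R) (a b x l : R) :
  a <= x < b ->
  (forall p q, a <= p -> p <= q -> q <= b -> f p <= f q) ->
  is_derive f x l -> 0 <= l.
Proof.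
  intros x_in f_mon f_l.
  apply is_derive_Reals in f_l.
  destruct (Rle_or_lt 0 l) as [| l_neg]; [assumption | exfalso].
  destruct (f_l (- l)) as [d close]; [lra |].
  pose proof (cond_pos d) as d_pos.
  set (e := Rmin (d / 2) ((b - x) / 2)).
  assert (e_pos : 0 < e) by (apply Rmin_glb_lt; lra).
  assert (e_le_d : e <= d / 2) by apply Rmin_l.
  assert (e_le_b : e <= (b - x) / 2) by apply Rmin_r.
  assert (quot_nonneg : 0 <= (f (x + e) - f x) / e).
  { apply Rdiv_le_0_compat; [| lra].
    assert (f x <= f (x + e)) by (apply f_mon; lra). lra. }
  specialize (close e ltac:(lra) ltac:(rewrite Rabs_pos_eq; lra)).
  apply Rabs_def2 in close. lra.
Qed.

Lemma survival_shift_lt (S : R -> R) (t x : R) :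
  (forall x, 0 < x -> 0 < S x) -> (forall x y, x <= y -> S y <= S x) ->
  (forall x, 0 < x -> ex_derive S x) -> (forall x, 0 < x -> Derive S x < 0) ->
  0 <= t -> 0 < x -> 0 < S (t + x) < S t.
Proof.
  intros S_pos S_mon S_der S'_neg t_ge0 x_pos.
  split; [apply S_pos; lra |].
  apply (Rlt_le_trans _ (S (t + x / 2))); [| apply S_mon; lra].
  enough (- S (t + x / 2) < - S (t + x)) by lra.
  apply (incr_function (fun y => - S y) 0 p_infty (fun y => - Derive S y));
    simpl; try lra.
  - intros z z_pos _. auto_derive; [apply S_der; lra | now rewrite Rmult_1_l].
  - intros z z_pos _. pose proof (S'_neg z z_pos). lra.
Qed.

Lemma hazard_residual (S : R -> R) (t x : R) :
  S t <> 0 -> hazard (residual S t) x = hazard S (t + x).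
Proof.
  intros St_neq0. unfold hazard, residual, Rdiv.
  rewrite Derive_scal_l.
  rewrite (Derive_ext _ (fun y => S (y + t))) by (intros; f_equal; ring).
  change (Derive (fun y => S (y + t)) x) with (Derive_n (fun y => S (y + t)) 1 x).
  rewrite Derive_n_comp_trans.
  change (Derive_n S 1 (x + t)) with (Derive S (x + t)).
  rewrite (Rplus_comm x t).
  destruct (Req_dec (S (t + x)) 0) as [-> | Stx_neq0].
  - rewrite Rmult_0_l, !Rinv_0. ring.
  - field. split; assumption.
Qed.

Lemma hazard_system (h S : R -> R) (x : R) :
  S x <> 0 -> ex_derive h (S x) -> ex_derive S x ->
  hazard (system h S) x = Hfun h (S x) * hazard S x.
Proof.
  intros Sx_neq0 h_der S_der. unfold hazard, system, Hfun.
  rewrite (Derive_comp h S x h_der S_der).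
  destruct (Req_dec (h (S x)) 0) as [-> | hSx_neq0].
  - unfold Rdiv. rewrite Rinv_0. ring.
  - field. split; assumption.
Qed.

Lemma hazard_ratio_system_residual (h S : R -> R) (t x : R) :
  S t <> 0 -> h (S t) <> 0 -> S (t + x) <> 0 -> Derive S (t + x) <> 0 ->
  ex_derive S (t + x) ->
  ex_derive h (S (t + x) / S t) -> ex_derive h (S (t + x)) ->
  hazard (system h (residual S t)) x / hazard (residual (system h S) t) x
  = Hfun h (S (t + x) / S t) / Hfun h (S (t + x)).
Proof.
  intros St_neq0 hSt_neq0 Stx_neq0 dS_neq0 S_der h_der_res h_der.
  assert (res_der : ex_derive (residual S t) x).
  { unfold residual. auto_derive. exact S_der. }
  assert (res_neq0 : residual S t x <> 0).
  { apply Rmult_integral_contrapositive_currified;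
      [| apply Rinv_neq_0_compat]; assumption. }
  rewrite (hazard_system h (residual S t) x res_neq0 h_der_res res_der).
  rewrite (hazard_residual (system h S) t x hSt_neq0).
  rewrite (hazard_residual S t x St_neq0).
  rewrite (hazard_system h S (t + x) Stx_neq0 h_der S_der).
  apply Rdiv_mult_r_r.
  apply Rmult_integral_contrapositive_currified;
    [apply Ropp_neq_0_compat | apply Rinv_neq_0_compat]; assumption.
Qed.

(* The sign of the derivative of p |-> H(p / c) / H(p): with u = p / c,
   Hu = H(u), dHu = H'(u), Hp = H(p), dHp = H'(p), the hypotheses say
   K(u) <= K(p) <= 0, and c (1 - u) = c - p <= 1 - p. *)
Lemma Hratio_derive_numerator_nonpos (c p Hu dHu Hp dHp : R) :
  0 < p < c -> c <= 1 -> 0 < Hu -> 0 < Hp ->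
  (1 - p / c) * dHu / Hu <= (1 - p) * dHp / Hp ->
  (1 - p) * dHp / Hp <= 0 ->
  dHu / c * Hp - Hu * dHp <= 0.
Proof.
  intros p_in c_le1 Hu_pos Hp_pos K_le K_nonpos.
  set (Ku := (1 - p / c) * dHu / Hu) in *.
  set (Kp := (1 - p) * dHp / Hp) in *.
  assert (numerator : dHu / c * Hp - Hu * dHp
                      = Hu * Hp * (Ku / (c - p) - Kp / (1 - p))).
  { unfold Ku, Kp. field. repeat split; lra. }
  rewrite numerator.
  assert (Ku / (c - p) <= Kp / (c - p)).
  { apply Rmult_le_compat_r; [apply Rlt_le, Rinv_0_lt_compat |]; lra. }
  assert (Kp / (c - p) <= Kp / (1 - p)).
  { assert (/ (1 - p) <= / (c - p)) by (apply Rinv_le_contravar; lra).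
    unfold Rdiv. nra. }
  assert (0 < Hu * Hp) by (apply Rmult_lt_0_compat; assumption).
  apply Rmult_le_0_l; lra.
Qed.

Lemma Rdiv_in_unit (p c : R) : 0 < p < c -> 0 < p / c < 1.
Proof.
  intros p_in. split; [apply Rdiv_lt_0_compat | apply (Rdiv_lt_1 _ c)]; lra.
Qed.

Section DominationFunction.

Variable h : R -> R.
Hypothesis h_0 : h 0 = 0.
Hypothesis h_mon : forall p q, 0 <= p -> p <= q -> q <= 1 -> h p <= h q.
Hypothesis h_der : forall p, 0 < p < 1 -> ex_derive h p.
Hypothesis h_der2 : forall p, 0 < p < 1 -> ex_derive (Derive h) p.
Hypothesis Hfun_neq0 : forall p, 0 < p < 1 -> Hfun h p <> 0.

Lemma domination_pos (p : R) : 0 < p < 1 -> 0 < h p.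
Proof.
  intros p_in.
  assert (0 <= h p) by (rewrite <- h_0; apply h_mon; lra).
  assert (h p <> 0).
  { intros hp_eq0. apply (Hfun_neq0 p p_in).
    unfold Hfun. rewrite hp_eq0. unfold Rdiv. rewrite Rinv_0. ring. }
  lra.
Qed.

Lemma domination_pos_le1 (p : R) : 0 < p <= 1 -> 0 < h p.
Proof.
  intros p_in.
  apply (Rlt_le_trans _ (h (p / 2))); [apply domination_pos | apply h_mon]; lra.
Qed.

Lemma Hfun_pos (p : R) : 0 < p < 1 -> 0 < Hfun h p.
Proof.
  intros p_in.
  assert (0 <= Derive h p).
  { apply (derive_nonneg_of_nondecreasing h 0 1 p); [lra | exact h_mon |].
    apply Derive_correct, h_der, p_in. }
  assert (0 <= Hfun h p).
  { unfold Hfun. apply Rdiv_le_0_compat; [nra | apply domination_pos, p_in]. }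
  pose proof (Hfun_neq0 p p_in). lra.
Qed.

Lemma ex_derive_Hfun (p : R) : 0 < p < 1 -> ex_derive (Hfun h) p.
Proof.
  intros p_in. unfold Hfun. auto_derive.
  repeat split; auto. apply Rgt_not_eq, domination_pos, p_in.
Qed.

Hypothesis K_decr : forall p q, 0 < p -> p <= q -> q < 1 ->
  (1 - q) * Derive (Hfun h) q / Hfun h q <= (1 - p) * Derive (Hfun h) p / Hfun h p.
Hypothesis K_nonpos : forall p, 0 < p < 1 ->
  (1 - p) * Derive (Hfun h) p / Hfun h p <= 0.

Lemma Hratio_nonincreasing (c : R) : 0 < c <= 1 ->
  forall p q, 0 < p -> p <= q -> q < c ->
  Hfun h (q / c) / Hfun h q <= Hfun h (p / c) / Hfun h p.
Proof.
  intros c_in.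
  apply (nonincreasing_of_derive_nonpos (fun p => Hfun h (p / c) / Hfun h p)
    (fun p => (Derive (Hfun h) (p / c) / c * Hfun h p
               - Hfun h (p / c) * Derive (Hfun h) p) / Hfun h p ^ 2) 0 c).
  - intros p p_in. pose proof (Rdiv_in_unit p c p_in). auto_derive.
    + repeat split; try apply ex_derive_Hfun; try apply Hfun_neq0; lra.
    + change (fun x => Hfun h x) with (Hfun h).
      unfold Rdiv. field. split; [apply Hfun_neq0 |]; lra.
  - intros p p_in. pose proof (Rdiv_in_unit p c p_in).
    assert (p <= p / c).
    { apply (Rmult_le_reg_r c); [lra |]. field_simplify; nra. }
    apply Rmult_le_0_r.
    + apply (Hratio_derive_numerator_nonpos c p); try lra;
        try (apply Hfun_pos; lra).
      * apply K_decr; lra.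
      * apply K_nonpos; lra.
    + apply Rlt_le, Rinv_0_lt_compat, pow_lt, Hfun_pos; lra.
Qed.

End DominationFunction.

Theorem proposition5p1 (Fbar h : R -> R) (t : R) :
  (* X : non-negative, absolutely continuous, support [0, oo) *)
  (forall x, x <= 0 -> Fbar x = 1) ->
  (forall x, 0 < x -> 0 < Fbar x < 1) ->
  (forall x y, x <= y -> Fbar y <= Fbar x) ->
  (forall x, continuous Fbar x) ->
  is_lim Fbar p_infty 0 ->
  (forall x, 0 < x -> ex_derive Fbar x) ->
  (forall x, 0 < x -> Derive Fbar x < 0) ->
  (* domination function h *)
  h 0 = 0 -> h 1 = 1 ->
  (forall p q, 0 <= p -> p <= q -> q <= 1 -> h p <= h q) ->
  (forall p, 0 <= p <= 1 -> continuity_pt h p) ->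
  (forall p, 0 < p < 1 -> ex_derive h p) ->
  (forall p, 0 < p < 1 -> ex_derive (Derive h) p) ->
  (* H(p) is well defined and non-zero, so that (1-p)H'(p)/H(p) makes sense *)
  (forall p, 0 < p < 1 -> Hfun h p <> 0) ->
  (* (1-p) H'(p) / H(p) is decreasing and non-positive on (0,1) *)
  (forall p q, 0 < p -> p <= q -> q < 1 ->
     (1 - q) * Derive (Hfun h) q / Hfun h q <= (1 - p) * Derive (Hfun h) p / Hfun h p) ->
  (forall p, 0 < p < 1 -> (1 - p) * Derive (Hfun h) p / Hfun h p <= 0) ->
  0 <= t ->
  c_order (system h (residual Fbar t)) (residual (system h Fbar) t).
Proof.
  intros F_0 F_in F_mon _ _ F_der F'_neg h_0 _ h_mon _ h_der h_der2 H_neq0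
    K_decr K_nonpos t_ge0.
  set (c := Fbar t).
  assert (c_in : 0 < c <= 1).
  { unfold c. destruct (Req_dec t 0) as [-> | t_neq0].
    - rewrite F_0; lra.
    - pose proof (F_in t ltac:(lra)). lra. }
  assert (p_in : forall x, 0 < x -> 0 < Fbar (t + x) < c).
  { intros x x_pos. apply survival_shift_lt; auto. intros z z_pos. apply F_in, z_pos. }
  assert (ratio : forall x, 0 < x ->
     hazard (system h (residual Fbar t)) x / hazard (residual (system h Fbar) t) x
     = Hfun h (Fbar (t + x) / c) / Hfun h (Fbar (t + x))).
  { intros x x_pos. specialize (p_in x x_pos).
    pose proof (Rdiv_in_unit _ _ p_in).
    apply hazard_ratio_system_residual.
    - fold c. apply Rgt_not_eq. lra.
    - fold c. apply Rgt_not_eq, (domination_pos_le1 h); auto.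
    - apply Rgt_not_eq. lra.
    - apply Rlt_not_eq, F'_neg. lra.
    - apply F_der. lra.
    - apply h_der. fold c. lra.
    - apply h_der. lra. }
  intros x y x_pos xy.
  rewrite !ratio by lra.
  apply (Hratio_nonincreasing h); auto; try (apply p_in; lra).
  apply F_mon. lra.
Qed.
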